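(* Let $G$ be a connected, nontraceable detour graph of order $n$. Then: (1) $G$ is $2$-connected (hence $\delta(G)\ge 2$); (2) every vertex of $G$ has at most one neighbour of degree $2$; (3) $G$ contains a longest path $P$ such that both endvertices of $P$ have degree at least $3$; (4) $\Delta(G)\le \tau(G)-4$; (5) if $T$ is the set of vertices of degree $2$ in $G$, then $|V(G)\setminus T|\ge |T|$; (6) $|E(G)|\ge \left\lceil \frac{5n}{4}\right\rceil$.
   Context: All graphs are finite and simple. The order of a path is its number of vertices. For a vertex $v$ of $G$, $\tau(v)$ is the order of a longest path in $G$ having $v$ as an endvertex, and $\tau(G)$ is the order of a longest path in $G$. A graph is traceable if it has a path containing all its vertices (a hamiltonian path), and nontraceable otherwise. A detour graph is a graph in which all vertices have the same value of $\tau(v)$. $\delta(G)$ and $\Delta(G)$ are the minimum and maximum degree. *)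

(* Finite simple graphs: symmetric irreflexive relation e on a finType T. *)
From mathcomp Require Import all_boot.
Set Implicit Arguments. Unset Strict Implicit. Unset Printing Implicit Defensive.

Section Graphs.
Variables (T : finType) (e : rel T).

(* a path: nonempty sequence of pairwise distinct vertices, consecutive ones adjacent;
   its order is its size (number of vertices) *)
Definition gpath (p : seq T) : bool :=
  if p is x :: s then path e x s && uniq p else false.

Definition endvertex (v : T) (p : seq T) : bool :=
  if p is x :: s then (v == x) || (v == last x s) else false.

Definition has_path_end (v : T) (k : nat) : bool :=
  [exists t : k.-tuple T, gpath t && endvertex v t].

Definition has_path (k : nat) : bool :=
  [exists t : k.-tuple T, gpath t].

(* paths have order at most #|T| since their vertices are distinct *)
Definition tau_v (v : T) : nat :=
  \max_(k < #|T|.+1 | has_path_end v k) k.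

Definition tauG : nat := \max_(k < #|T|.+1 | has_path k) k.

Definition traceable : Prop := exists p : seq T, gpath p /\ size p = #|T|.

Definition detour : Prop := forall u v : T, tau_v u = tau_v v.

Definition connected_graph : Prop := forall u v : T, connect e u v.

Definition deg (v : T) : nat := #|[set u | e v u]|.

Definition min_deg : nat := \big[minn/#|T|]_(v : T) deg v.
Definition max_deg : nat := \max_(v : T) deg v.

Definition two_connected : Prop :=
  2 < #|T| /\ connected_graph /\
  forall x u v : T, u != x -> v != x ->
    connect (fun a b => [&& e a b, a != x & b != x]) u v.

Definition edge_set : {set {set T}} :=
  [set [set x; y] | x in T, y in T & e x y].

End Graphs.

From mathcomp Require Import all_boot zify.
Set Implicit Arguments. Unset Strict Implicit. Unset Printing Implicit Defensive.

(* In a detour graph every vertex is an end of a longest path, so the classical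
   arguments about ends of longest paths apply at every vertex.  An end has all its
   neighbours on the path, and a longest path never closes into a cycle: in a connected
   nontraceable graph the cycle could be reopened at a vertex having a neighbour off it.
   Hence no Posa rotation of a longest path [v ... m q ... l] at a neighbour [m] of [l]
   makes [q] adjacent to [v].  Consequences: removing [x] keeps the graph connected,
   since a component of [G - x] missed by a longest path from [x] would extend it; a
   degree-2 neighbour of [v] is the second vertex of every longest path from [v], so
   there is at most one; a rotation turns a degree-2 end into an end of degree at least
   3; and for such an end [l] of a longest path from [v], the successors of the
   neighbours of [l] avoid the neighbourhood of [v], so [deg v + deg l + 1 <= tau].
   Sending each degree-2 vertex to a neighbour of another degree is injective, which
   with the handshake lemma gives the edge bound. *)

Lemma next_last_cat (T : eqType) (x y : T) (A B : seq T) :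
  uniq (x :: A ++ y :: B) -> next (x :: A ++ y :: B) (last x A) = y.
Proof.
move=> uP; have lastE : last x A = nth x (x :: A ++ y :: B) (size A).
  by rewrite (last_nth x) -cat_cons nth_cat ltnSn.
have sizeA : size A < size (x :: A ++ y :: B) by rewrite /= size_cat; lia.
by rewrite next_nth {1}lastE mem_nth // lastE index_uniq //= nth_cat ltnn subnn.
Qed.

Section Paths.
Variables (T : finType) (e : rel T).

Lemma gpath_size_le p : gpath e p -> size p <= #|T|.
Proof. by case: p => // x s /andP[_ /card_uniqP <-]; apply: max_card. Qed.

Lemma has_pathP k : reflect (exists p, gpath e p /\ size p = k) (has_path e k).
Proof.
apply: (iffP existsP) => [[t tP]|[p [pP <-]]]; last by exists (in_tuple p).
by exists (val t); rewrite size_tuple.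
Qed.

Lemma has_path_endP v k :
  reflect (exists p, [/\ gpath e p, size p = k & endvertex v p]) (has_path_end e v k).
Proof.
apply: (iffP existsP) => [[t /andP[tP tv]]|[p [pP <- pv]]].
  by exists (val t); rewrite size_tuple.
by exists (in_tuple p); rewrite pP.
Qed.

Lemma tauG_max p : gpath e p -> size p <= tauG e.
Proof.
move=> pP; have pT : size p < #|T|.+1 by rewrite ltnS gpath_size_le.
by apply: (@leq_bigmax_cond _ _ _ (Ordinal pT)); apply/has_pathP; exists p.
Qed.

Lemma tau_v_max v p : gpath e p -> endvertex v p -> size p <= tau_v e v.
Proof.
move=> pP pv; have pT : size p < #|T|.+1 by rewrite ltnS gpath_size_le.
by apply: (@leq_bigmax_cond _ _ _ (Ordinal pT)); apply/has_path_endP; exists p.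
Qed.

Lemma tau_v_witness v : exists p, [/\ gpath e p, size p = tau_v e v & endvertex v p].
Proof.
have oneT : 1 < #|T|.+1 by rewrite ltnS; apply/card_gt0P; exists v.
have one_v : has_path_end e v (Ordinal oneT).
  by apply/has_path_endP; exists [:: v]; rewrite /= eqxx.
rewrite /tau_v (bigmax_eq_arg (Ordinal oneT)) //.
by case: arg_maxnP => // i /has_path_endP.
Qed.

Lemma tauG_witness (v : T) : exists p, gpath e p /\ size p = tauG e.
Proof.
have oneT : 1 < #|T|.+1 by rewrite ltnS; apply/card_gt0P; exists v.
rewrite /tauG (bigmax_eq_arg (Ordinal oneT)); last by apply/has_pathP; exists [:: v].
by case: arg_maxnP => [|i /has_pathP //]; apply/has_pathP; exists [:: v].
Qed.

Hypothesis e_sym : symmetric e.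

Lemma gpath_rev p : gpath e p -> gpath e (rev p).
Proof.
case: p => // x s /andP[sP uS]; move: uS; rewrite (lastI x s) rcons_uniq => uS.
rewrite rev_rcons /= rev_path mem_rev rev_uniq uS andbT.
by apply: sub_path sP => a b; rewrite e_sym.
Qed.

Lemma gpath_posa x A y B : gpath e (x :: A ++ y :: B) -> e (last x A) (last y B) ->
  gpath e (x :: A ++ rev (y :: B)).
Proof.
move=> /andP[pP uP] lAB; apply/andP; split.
  move: pP; rewrite !cat_path => /andP[-> /= /andP[_ BP]] /=.
  rewrite (lastI y B) rev_rcons /= lAB rev_path.
  by apply: sub_path BP => a b; rewrite e_sym.
by move: uP; rewrite !cons_uniq !cat_uniq !mem_cat mem_rev rev_uniq has_rev.
Qed.

End Paths.

Section Degrees.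
Variables (T : finType) (e : rel T).

Lemma uniq_nbrs_le_deg v s : uniq s -> all (e v) s -> size s <= deg e v.
Proof.
move=> uS /allP sN; rewrite -(card_uniqP uS); apply/subset_leq_card/subsetP => u uS'.
by rewrite inE sN.
Qed.

Lemma min_deg_ge k : k <= #|T| -> (forall v, k <= deg e v) -> k <= min_deg e.
Proof.
by move=> kT kD; rewrite /min_deg; elim/big_ind: _ => // a b; rewrite leq_min => -> ->.
Qed.

Lemma sum_deg : \sum_v deg e v = #|[set p : T * T | e p.1 p.2]|.
Proof.
have degE v : deg e v = \sum_u (e v u : nat).
  by rewrite /deg -sum1_card big_mkcond; apply: eq_bigr => u _; rewrite inE.
rewrite (eq_bigr _ (fun v _ => degE v)) pair_big -sum1_card [RHS]big_mkcond /=.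
by apply: eq_bigr => p _; rewrite inE.
Qed.

(* An arc [(a, b)] is recovered from its edge [{a, b}] and the order of [a] and [b]
   in [enum T]. *)
Lemma card_arcs_le_edges : #|[set p : T * T | e p.1 p.2]| <= 2 * #|edge_set e|.
Proof.
pose h (p : T * T) := ([set p.1; p.2], enum_rank p.1 < enum_rank p.2).
have h_inj : injective h.
  move=> [a b] [a' b'] [abE ltE] /=.
  have : a \in [set a'; b'] /\ b \in [set a'; b'] by rewrite -abE !inE !eqxx orbT.
  rewrite !inE => -[/orP[]/eqP aE /orP[]/eqP bE]; rewrite {}aE {}bE in abE ltE *.
  - have : b' \in [set a'; a'] by rewrite abE !inE eqxx orbT.
    by rewrite !inE orbb => /eqP->.
  - by [].
  - by move: ltE; case: ltngtP => // /val_inj/enum_rank_inj->.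
  - have : a' \in [set b'; b'] by rewrite abE !inE eqxx.
    by rewrite !inE orbb => /eqP->.
rewrite -(card_imset _ h_inj) mulnC -[2]card_bool -cardsT -cardsX.
apply/subset_leq_card/subsetP => _ /imsetP[[a b] abE ->].
by rewrite inE in abE; rewrite in_setX in_setT andbT; apply/imset2P; exists a b; rewrite ?inE.
Qed.

Lemma sum_deg_ge2 : (forall v, 2 <= deg e v) ->
  2 * #|T| + #|[set v | deg e v != 2]| <= \sum_v deg e v.
Proof.
move=> deg2; rewrite mulnC -sum_nat_const -sum1_card [X in _ + X]big_mkcond -big_split /=.
by apply: leq_sum => v _; rewrite inE; have := deg2 v; case: eqP => [->|] //=; lia.
Qed.

Lemma card_edge_set_ge : (forall v, 2 <= deg e v) ->
  #|[set v | deg e v == 2]| <= #|[set v | deg e v != 2]| -> 5 * #|T| <= 4 * #|edge_set e|.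
Proof.
move=> deg2 few2; have := sum_deg_ge2 deg2; have := card_arcs_le_edges.
have : #|[set v | deg e v == 2]| + #|[set v | deg e v != 2]| = #|T|.
  by rewrite -(cardsC [set v | deg e v == 2]); congr (_ + _); apply: eq_card => v; rewrite !inE.
rewrite sum_deg; lia.
Qed.

End Degrees.

Section DetourGraphs.
Variables (T : finType) (e : rel T).
Hypotheses (e_sym : symmetric e) (e_irr : irreflexive e).
Hypotheses (G_conn : connected_graph e) (G_ntr : ~ traceable e) (G_det : detour e).

Definition longest (p : seq T) : bool := gpath e p && (size p == tauG e).

Lemma connected_edge_out (S : pred T) a b : a \in S -> b \notin S ->
  exists y z, [/\ y \in S, z \notin S & e y z].
Proof.
move=> aS bS; have [/exists_inP[y yS /existsP[z /andP[zS yz]]] | noOut] :=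
  boolP [exists y in S, exists z, (z \notin S) && e y z]; first by exists y, z.
have S_closed : closed e S.
  suff out_in y z : e y z -> y \in S -> z \in S.
    by move=> y z yz; apply/idP/idP; apply: out_in; rewrite // e_sym.
  move=> yz yS; apply: contraNT noOut => zS.
  by apply/exists_inP; exists y => //; apply/existsP; exists z; rewrite zS yz.
by move: (closed_connect S_closed (G_conn a b)); rewrite aS (negbTE bS).
Qed.

Lemma gpath_lt_card p : gpath e p -> size p < #|T|.
Proof.
move=> pP; rewrite ltn_neqAle (gpath_size_le pP) andbT.
by apply/eqP => pT; apply: G_ntr; exists p.
Qed.

Lemma gpath_exit p : gpath e p -> exists y z, [/\ y \in p, z \notin p & e y z].
Proof.
move=> pP; have [z zNp] : exists z, z \notin p.
  apply/existsP; rewrite -negb_forall; apply: contraTN (gpath_lt_card pP).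
  move=> /forallP pT; rewrite -leqNgt (leq_trans _ (card_size p)) //.
  by apply/subset_leq_card/subsetP => z _; apply: pT.
by case: p pP zNp => // x s _; apply: connected_edge_out; apply: mem_head.
Qed.

Lemma longest_rev_cons x s : longest (x :: s) -> longest (last x s :: rev (belast x s)).
Proof.
have revE : rev (x :: s) = last x s :: rev (belast x s) by rewrite (lastI x s) rev_rcons.
by case/andP=> pP pS; rewrite -revE /longest gpath_rev // size_rev.
Qed.

Lemma longest_head_closed x s y : longest (x :: s) -> e x y -> y \in x :: s.
Proof.
case/andP=> /andP[sP uS] /eqP pS xy; apply: contraT => yNp.
have : gpath e (y :: x :: s) by rewrite /gpath /= e_sym xy sP /= yNp.
by move/tauG_max; rewrite -pS ltnn.
Qed.

Lemma longest_last_closed x s y : longest (x :: s) -> e (last x s) y -> y \in x :: s.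
Proof.
move=> /longest_rev_cons /longest_head_closed ly /ly.
by rewrite -rev_rcons mem_rev -lastI.
Qed.

Lemma longest_no_cycle x s : longest (x :: s) -> ~~ e (last x s) x.
Proof.
move=> lP; apply/negP => lx; case/andP: (lP) => pP /eqP pS.
have [y [z [yP zNp yz]]] := gpath_exit pP.
have cP : cycle e (x :: s) by rewrite /= rcons_path lx andbT; case/andP: pP.
case/rot_to: yP => i t rotE.
have : gpath e (z :: y :: t).
  move: cP zNp pP; rewrite -(rot_cycle i) -(mem_rot i) /gpath -(rot_uniq i) rotE.
  by rewrite /= rcons_path [e z y]e_sym yz => /andP[-> _] -> /andP[_ ->].
by move/tauG_max; rewrite -pS -(size_rot i (x :: s)) rotE ltnn.
Qed.

Lemma longest_posa v A q B : longest (v :: A ++ q :: B) -> e (last v A) (last q B) ->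
  longest (v :: A ++ rev (q :: B)).
Proof.
case/andP=> pP pS lAB; rewrite /longest gpath_posa //.
by rewrite -(eqP pS) /= !size_cat size_rev.
Qed.

Lemma longest_no_cross v A q B : longest (v :: A ++ q :: B) -> e (last v A) (last q B) ->
  ~~ e v q.
Proof.
move=> lP lAB; rewrite e_sym.
by have := longest_no_cycle (longest_posa lP lAB); rewrite last_cat rev_cons last_rcons.
Qed.

Lemma longest_from v : exists s, longest (v :: s).
Proof.
have [[|u t] [pP pS]] := tauG_witness e v; first by [].
have [q [qP qS qv]] := tau_v_witness e v.
have : size q = tauG e.
  apply/eqP; rewrite eqn_leq tauG_max // qS (G_det v u) -pS tau_v_max //.
  by rewrite /= eqxx.
case: q qP qS qv => // x s qP _ /orP[/eqP-> | /eqP->] /eqP qS.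
  by exists s; rewrite /longest qP qS.
by exists (rev (belast x s)); rewrite longest_rev_cons // /longest qP qS.
Qed.

Lemma longest_from_cons v : exists h s, longest (v :: h :: s).
Proof.
have [[|h s] lP] := longest_from v; last by exists h, s.
have [y [z [yv zNv yz]]] := gpath_exit (p := [:: v]) isT.
rewrite inE in yv; rewrite (eqP yv) in yz.
by rewrite (longest_head_closed lP yz) in zNv.
Qed.

Definition avoid (x : T) : rel T := fun a b => [&& e a b, a != x & b != x].

Lemma avoid_sym x : symmetric (avoid x).
Proof. by move=> a b; rewrite /avoid e_sym [(a != x) && _]andbC. Qed.

Lemma connect_avoid_head x h s w : longest (x :: h :: s) -> w != x ->
  connect (avoid x) h w.
Proof.
move=> lP wx; apply: contraT => hNw.
have hsP : path (avoid x) h s.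
  case/andP: lP => /andP[/= /andP[_ hsP] /andP[xNhs _]] _.
  apply: (sub_in_path (P := [pred z | z != x])) hsP.
    by move=> a b; rewrite !inE => ax bx ab; rewrite /avoid ab ax bx.
  by apply/allP => a ahs; rewrite inE; apply: contraNneq xNhs => <-.
pose S := [pred z | (z != x) && connect (avoid x) w z].
have wS : w \in S by rewrite inE wx connect0.
have xNS : x \notin S by rewrite inE eqxx.
have [a [b [aS bNS ab]]] := connected_edge_out wS xNS.
rewrite !inE in aS bNS; case/andP: aS => ax wa.
have bx : b = x.
  apply/eqP; apply: contraNT bNS => bx; rewrite bx (connect_trans wa) //.
  by rewrite connect1 // /avoid ab ax bx.
have xa : e x a by rewrite -bx e_sym.
have := longest_head_closed lP xa; rewrite inE (negbTE ax) /=.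
move/(path_connect hsP) => ha; case/negP: hNw; apply: connect_trans ha _.
by rewrite (sym_connect_sym (avoid_sym x)).
Qed.

Lemma connect_avoid x u w : u != x -> w != x -> connect (avoid x) u w.
Proof.
have [h [s lP]] := longest_from_cons x; move=> ux wx.
apply: connect_trans (connect_avoid_head lP wx).
by rewrite (sym_connect_sym (avoid_sym x)) (connect_avoid_head lP ux).
Qed.

Lemma two_connected_detour : 0 < #|T| -> two_connected e.
Proof.
case/card_gt0P=> v _; have [h [s /andP[pP _]]] := longest_from_cons v.
split; first by have := gpath_lt_card pP; rewrite /=; lia.
by split=> // x u w; apply: connect_avoid.
Qed.

Lemma deg_ge2 v : 2 <= deg e v.
Proof.
have [h [s /andP[/andP[/= /andP[vh _] _] _]]] := longest_from_cons v.
have hv : v != h by apply: contraTneq vh => ->; rewrite e_irr.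
have vhP : gpath e [:: v; h] by rewrite /gpath /= vh inE hv.
have [_ [z [_ zNvh _]]] := gpath_exit vhP.
rewrite !inE negb_or in zNvh; case/andP: zNvh => zv zh.
case/connectP: (connect_avoid hv zh) => [[|a p]] /=.
  by move=> _ zE; rewrite zE eqxx in zv.
case/andP=> /and3P[va _ ah] _ _.
by apply: (uniq_nbrs_le_deg (s := [:: h; a])); rewrite /= ?inE ?vh ?va // eq_sym ah.
Qed.

Lemma longest_deg2_nbr v s u : longest (v :: s) -> e v u -> deg e u = 2 -> head v s = u.
Proof.
move=> lP vu u2; have uv : u != v by apply: contraTneq vu => ->; rewrite e_irr.
have := longest_head_closed lP vu; rewrite inE (negbTE uv) /= => us.
case/splitPr: us lP => s1 s2 lP; case: s1 lP => [//|y s1] lP.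
case: s2 lP => [|w s2] lP.
  by have := longest_no_cycle lP; rewrite last_cat /= e_sym vu.
case/andP: lP => /andP[pP uP] _; rewrite cat_path /= in pP.
case/andP: pP => _ /and3P[yu uw _].
move: uP; rewrite cons_uniq cat_uniq => /andP[vNp /and3P[_ /hasPn rNl _]].
have wNl : w \notin y :: s1 by apply: rNl; rewrite !inE eqxx orbT.
rewrite mem_cat negb_or in vNp; case/andP: vNp => vNl.
rewrite !inE !negb_or => /and3P[_ vw _].
suff : 3 <= deg e u by rewrite u2.
apply: (uniq_nbrs_le_deg (s := [:: last y s1; w; v])).
  rewrite /= !inE !negb_or andbT -andbA [w == v]eq_sym vw andbT.
  by apply/andP; split; [apply: contraNneq wNl | apply: contraNneq vNl] => <-; apply: mem_last.
by rewrite /= [e u (last y s1)]e_sym yu uw [e u v]e_sym vu.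
Qed.

Lemma deg2_nbr_uniq v a b : e v a -> e v b -> deg e a = 2 -> deg e b = 2 -> a = b.
Proof.
move=> va vb a2 b2; have [s lP] := longest_from v.
by rewrite -(longest_deg2_nbr lP va a2) (longest_deg2_nbr lP vb b2).
Qed.

Lemma card_deg2_nbrs_le1 v : #|[set u | e v u & deg e u == 2]| <= 1.
Proof.
apply/card_le1_eqP => a b; rewrite !inE => /andP[va /eqP a2] /andP[vb /eqP b2].
exact: deg2_nbr_uniq vb va b2 a2.
Qed.

Lemma card_deg2_le : #|[set v | deg e v == 2]| <= #|[set v | deg e v != 2]|.
Proof.
pose g t := odflt t [pick u | e t u && (deg e u != 2)].
have gP t : deg e t = 2 -> e t (g t) && (deg e (g t) != 2).
  move=> t2; rewrite /g; case: pickP => [//|noNbr].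
  have /card_gt1P[a [b [ta tb ab]]] : 1 < #|[set u | e t u]| by rewrite -/(deg e t) t2.
  rewrite !inE in ta tb; have := noNbr a; have := noNbr b; rewrite /= ta tb /=.
  by move=> /negbFE/eqP b2 /negbFE/eqP a2; rewrite (deg2_nbr_uniq ta tb a2 b2) eqxx in ab.
have g_inj : {in [set v | deg e v == 2] &, injective g}.
  move=> a b; rewrite !inE => /eqP a2 /eqP b2 gE.
  have /andP[ag _] := gP a a2; have /andP[bg _] := gP b b2.
  by rewrite gE e_sym in ag; rewrite e_sym in bg; apply: deg2_nbr_uniq ag bg a2 b2.
rewrite -(card_in_imset g_inj); apply/subset_leq_card/subsetP => _ /imsetP[t t2 ->].
by rewrite inE in t2; rewrite inE; case/andP: (gP t (eqP t2)).
Qed.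

Lemma longest_split_end_nbr v s m : longest (v :: s) -> e (last v s) m ->
  exists A q B, [/\ s = A ++ q :: B, last v A = m & next (v :: s) m = q].
Proof.
move=> lP lm; have mP := longest_last_closed lP lm.
case/splitPl: mP lP lm => A [|q B] mE lP lm; first by rewrite cats0 mE e_irr in lm.
exists A, q, B; split=> //; rewrite -mE next_last_cat //.
by case/andP: lP => /andP[].
Qed.

Lemma longest_end_nbr_next v s m : longest (v :: s) -> e (last v s) m ->
  [/\ next (v :: s) m \in s, e m (next (v :: s) m) & ~~ e v (next (v :: s) m)].
Proof.
move=> lP lm; have [A [q [B [sE mE ->]]]] := longest_split_end_nbr lP lm.
subst s m; rewrite last_cat /= e_sym in lm; split.
- by rewrite mem_cat mem_head orbT.
- by case/andP: lP => /andP[]; rewrite cat_path => /andP[_ /andP[]].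
- exact: longest_no_cross lP lm.
Qed.

Lemma longest_rotate v s m : longest (v :: s) -> e (last v s) m ->
  exists s', longest (v :: s') /\ last v s' = next (v :: s) m.
Proof.
move=> lP lm; have [A [q [B [sE mE ->]]]] := longest_split_end_nbr lP lm.
subst s m; rewrite last_cat /= e_sym in lm.
exists (A ++ rev (q :: B)); split; first exact: longest_posa.
by rewrite last_cat rev_cons last_rcons.
Qed.

(* Rotating at a neighbour [m] of a degree-2 end [l], other than its predecessor, makes
   [next m] the new end; were it of degree 2, [m] would have two degree-2 neighbours. *)
Lemma longest_end_deg_ge3 v : exists s, longest (v :: s) && (3 <= deg e (last v s)).
Proof.
have [s lP] := longest_from v; set l := last v s.
have [l3 | ] := leqP 3 (deg e l); first by exists s; rewrite lP l3.
rewrite ltnS => l_le2; have l2 : deg e l = 2 by apply/eqP; rewrite eqn_leq l_le2 deg_ge2.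
have [m lm mNprev] : exists2 m, e l m & m != prev (v :: s) l.
  have /card_gt1P[m1 [m2 [lm1 lm2 m12]]] : 1 < #|[set u | e l u]| by rewrite -/(deg e l) l2.
  rewrite !inE in lm1 lm2.
  have [m1E | ] := eqVneq m1 (prev (v :: s) l); last by exists m1.
  by exists m2; rewrite // -m1E eq_sym.
have [s' [lP' lE]] := longest_rotate lP lm.
exists s'; rewrite lP' lE /=; have [_ mq _] := longest_end_nbr_next lP lm.
rewrite leqNgt ltnS; apply: contra mNprev => q_le2.
have q2 : deg e (next (v :: s) m) = 2 by apply/eqP; rewrite eqn_leq q_le2 deg_ge2.
have uP : uniq (v :: s) by case/andP: lP => /andP[].
by rewrite -(deg2_nbr_uniq mq _ q2 l2) ?prev_next // e_sym.
Qed.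

Lemma deg_add4_le_tauG v : deg e v + 4 <= tauG e.
Proof.
have [s /andP[lP l3]] := longest_end_deg_ge3 v; set l := last v s in l3.
have /andP[/andP[_ uP] /eqP pS] := lP.
have [vNs uS] : v \notin s /\ uniq s by apply/andP.
set F := [set next (v :: s) m | m in [set u | e l u]].
have sub_s : [set u | e v u] :|: F \subset [set u in s].
  apply/subsetP => u; rewrite !inE => /orP[vu | /imsetP[m lm ->]].
    have := longest_head_closed lP vu; rewrite inE; case: eqP => // uv.
    by rewrite uv e_irr in vu.
  by rewrite inE in lm; case: (longest_end_nbr_next lP lm).
have disj : [set u | e v u] :&: F = set0.
  apply/setP => u; rewrite !inE; apply/negP => /andP[vu /imsetP[m lm uE]].
  by rewrite inE in lm; case: (longest_end_nbr_next lP lm); rewrite -uE vu.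
have := cardsUI [set u | e v u] F; rewrite disj cards0 addn0.
rewrite card_imset; last exact: can_inj (prev_next uP).
rewrite -/(deg e v) -/(deg e l) => cardU.
have := subset_leq_card sub_s; rewrite cardU cardsE (card_uniqP uS).
by move: pS l3 => /= <-; lia.
Qed.

Lemma longest_ends_deg_ge3 : 0 < #|T| -> exists x s,
  [/\ gpath e (x :: s), size (x :: s) = tauG e, 3 <= deg e x & 3 <= deg e (last x s)].
Proof.
case/card_gt0P=> v _; have [s0 /andP[_ l3]] := longest_end_deg_ge3 v.
have [s /andP[lP x3]] := longest_end_deg_ge3 (last v s0).
set l := last v s0 in l3 lP x3.
have /andP[pP /eqP pS] := longest_rev_cons lP.
exists (last l s), (rev (belast l s)); split=> //.
rewrite -[last _ _]/(last l (last l s :: rev (belast l s))).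
by rewrite -rev_rcons -lastI rev_cons last_rcons.
Qed.

End DetourGraphs.

Theorem theorem2p2 (T : finType) (e : rel T)
  (T_nonempty : 0 < #|T|) (e_sym : symmetric e) (e_irr : irreflexive e)
  (Gconn : connected_graph e) (Gntr : ~ traceable e) (Gdet : detour e) :
  (two_connected e /\ 2 <= min_deg e) /\
  (forall v : T, #|[set u | e v u & deg e u == 2]| <= 1) /\
  (exists (x : T) (s : seq T), [/\ gpath e (x :: s), size (x :: s) = tauG e,
      3 <= deg e x & 3 <= deg e (last x s)]) /\
  max_deg e + 4 <= tauG e /\
  #|[set v | deg e v == 2]| <= #|[set v | deg e v != 2]| /\
  (5 * #|T| + 3) %/ 4 <= #|edge_set e|.
Proof.
have G2 : two_connected e by apply: two_connected_detour.
have deg2 v : 2 <= deg e v by apply: deg_ge2.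
have deg4 v : deg e v + 4 <= tauG e by apply: deg_add4_le_tauG.
have few2 : #|[set v | deg e v == 2]| <= #|[set v | deg e v != 2]|.
  by apply: card_deg2_le.
split; first by split=> //; apply: min_deg_ge deg2; case: G2 => /ltnW.
split; first by move=> v; apply: card_deg2_nbrs_le1.
split; first by apply: longest_ends_deg_ge3.
split.
  case/card_gt0P: T_nonempty => v _; have := deg4 v.
  have : max_deg e <= tauG e - 4 by apply/bigmax_leqP => u _; have := deg4 u; lia.
  lia.
by split=> //; have := card_edge_set_ge deg2 few2; lia.
Qed.
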